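(* Let $n\ge 6$, $1\le k\le n-1$, let $I,J$ be tightly $r$-interlacing $k$-subsets of $\{1,\dots,n\}$ with $I\setminus J=\{i_1,\dots,i_r\}$, $J\setminus I=\{j_1,\dots,j_r\}$, $1\le i_1<j_1<i_2<j_2<\dots<i_r<j_r\le n$, let $b_1,\dots,b_{2r}\in\mathbb{C}[[t]]$ with $\sum_{l=1}^{2r}b_l=0$, and put $S_m=\sum_{g=1}^m b_g$. If $\varphi=(\varphi_i)_{i=1}^n$ is an endomorphism of $\mathbb{M}(I,J)$, then there are $a,b,c,d\in\mathbb{C}[[t]]$ such that $t\mid c$, and $t\mid (d-a)S_{2m}-S_{2m}^2\,t^{-1}c$ for every $m=1,\dots,r-1$, and $\varphi_{j_r}=\begin{pmatrix}a&b\\c&d\end{pmatrix}$, $\varphi_{i_l}=\begin{pmatrix}a+S_{2l-1}t^{-1}c & tb+(d-a)S_{2l-1}-S_{2l-1}^2t^{-1}c\\ t^{-1}c & d-S_{2l-1}t^{-1}c\end{pmatrix}$, $\varphi_{j_l}=\begin{pmatrix}a+S_{2l}t^{-1}c & b+t^{-1}\big((d-a)S_{2l}-S_{2l}^2t^{-1}c\big)\\ c & d-S_{2l}t^{-1}c\end{pmatrix}$ for $l=1,\dots,r$, and $\varphi_i=\varphi_{i-1}$ for every $i\in (I\cap J)\cup(I^c\cap J^c)$ (indices of vertices taken modulo $n$, vertex $0$ = vertex $n$).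
   Context: $\Gamma_n$ is the quiver with vertices $1,\dots,n$ on a cycle (vertex $0$ identified with $n$), arrows $x_i\colon i-1\to i$, $y_i\colon i\to i-1$. $B_{k,n}$ is its completed path algebra modulo the closure of the ideal generated by $xy=yx$ and $x^k=y^{n-k}$ at every vertex; its centre is $\mathbb{C}[[t]]$, $t=\sum_i x_iy_i$. $I,J$ are tightly $r$-interlacing if there are $\{i_1,i_3,\dots,i_{2r-1}\}\subset I\setminus J$, $\{i_2,\dots,i_{2r}\}\subset J\setminus I$ with $i_1<i_2<\dots<i_{2r}<i_1$ cyclically, no larger such subsets exist, and $|I\cap J|=k-r$. The module $\mathbb{M}(I,J)$ has $V_i=\mathbb{C}[[t]]^2$ at each vertex, with $x_{i_l}=\begin{pmatrix}t&b_{2l-1}\\0&1\end{pmatrix}$, $y_{i_l}=\begin{pmatrix}1&-b_{2l-1}\\0&t\end{pmatrix}$, $x_{j_l}=\begin{pmatrix}1&b_{2l}\\0&t\end{pmatrix}$, $y_{j_l}=\begin{pmatrix}t&-b_{2l}\\0&1\end{pmatrix}$ ($l=1,\dots,r$), $x_i=tE$, $y_i=E$ for $i\notin I\cup J$, and $x_i=E$, $y_i=tE$ for $i\in I\cap J$ ($E$ the $2\times 2$ identity). An endomorphism is a tuple of $2\times2$ matrices $\varphi_i$ over $\mathbb{C}[[t]]$ with $x_i\varphi_{i-1}=\varphi_ix_i$ and $y_i\varphi_i=\varphi_{i-1}y_i$ for all $i$. Notation: if $t^dv=w$ for a positive integer $d$, then $t^{-d}w$ denotes $v$. *)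

From HB Require Import structures.
From mathcomp Require Import all_boot all_order all_algebra.
From mathcomp Require Import reals complex.
Set Implicit Arguments. Unset Strict Implicit. Unset Printing Implicit Defensive.
Import Order.TTheory GRing.Theory Num.Theory.
Local Open Scope ring_scope.

Definition CC (R : realType) := (R[i])%C.

(* Formal power series K[[t]] : a series is its coefficient sequence. *)
Definition fps (K : Type) := nat -> K.

Section FPS.
Variable K : comRingType.
Definition fzero : fps K := fun _ => 0.
Definition fone : fps K := fun n => if n == 0%N then 1 else 0.
Definition fadd (f g : fps K) : fps K := fun n => f n + g n.
Definition fopp (f : fps K) : fps K := fun n => - f n.
Definition fsub (f g : fps K) : fps K := fadd f (fopp g).
Definition fmul (f g : fps K) : fps K :=
  fun n => \sum_(m < n.+1) f m * g (n - m)%N.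
Definition ft : fps K := fun n => if n == 1%N then 1 else 0.
(* t | f  <->  constant coefficient vanishes *)
Definition tdvd (f : fps K) : Prop := f 0%N = 0.
(* t^{-1} f : the unique g with t g = f (when t | f); shift of coefficients *)
Definition tinv (f : fps K) : fps K := fun n => f n.+1.

Definition mat2 := 'M[fps K]_2.
Definition mx2 (a b c d : fps K) : mat2 :=
  \matrix_(i < 2, j < 2)
    if (i : nat) == 0%N then (if (j : nat) == 0%N then a else b)
    else (if (j : nat) == 0%N then c else d).
Definition mmul (A B : mat2) : mat2 :=
  \matrix_(i < 2, j < 2) fadd (fmul (A i 0) (B 0 j)) (fmul (A i 1) (B 1 j)).
Definition mE : mat2 := mx2 fone fzero fzero fone.
Definition mtE : mat2 := mx2 ft fzero fzero ft.

Fixpoint psum (b : nat -> fps K) (m : nat) : fps K :=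
  if m is m'.+1 then fadd (psum b m') (b m) else fzero.
End FPS.

(* vertices are 1..n; predecessor on the cycle (vertex 0 = vertex n) *)
Definition prevv (n v : nat) : nat := if v == 1%N then n else v.-1.

Definition ksubset (n k : nat) (I : seq nat) : bool :=
  [&& uniq I, all (fun i => 0 < i <= n)%N I & size I == k].

Definition cyc_sorted (s : seq nat) : Prop :=
  exists p, sorted ltn (rot p s).

(* s alternates: odd positions (a_1, a_3, ...) in I\J, even positions in J\I *)
Definition alternating (I J s : seq nat) : bool :=
  all (fun p => if odd p then (nth 0 s p \in J) && (nth 0 s p \notin I)
                else (nth 0 s p \in I) && (nth 0 s p \notin J))
      (iota 0 (size s)).

Definition interlace_witness (I J : seq nat) (r : nat) : Prop :=
  exists s : seq nat, [/\ size s = (2 * r)%N, cyc_sorted s & alternating I J s].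

Definition tightly_interlacing (k : nat) (I J : seq nat) (r : nat) : Prop :=
  [/\ interlace_witness I J r,
      (forall r', (r < r')%N -> ~ interlace_witness I J r') &
      size [seq x <- I | x \in J] = (k - r)%N].

Section Module.
Variable R : realType.
Local Notation C := (CC R).
Variables (n r : nat) (I J : seq nat) (iI jJ : nat -> nat) (b : nat -> fps C).

Definition ipos (v : nat) : nat := (index v (map iI (iota 1 r))).+1.
Definition jpos (v : nat) : nat := (index v (map jJ (iota 1 r))).+1.

Definition xarr (v : nat) : mat2 C :=
  if v \in I then
    if v \in J then mE C
    else mx2 (ft C) (b (2 * ipos v).-1) (fzero C) (fone C)
  else
    if v \in J then mx2 (fone C) (b (2 * jpos v)) (fzero C) (ft C)
    else mtE C.

Definition yarr (v : nat) : mat2 C :=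
  if v \in I then
    if v \in J then mtE C
    else mx2 (fone C) (fopp (b (2 * ipos v).-1)) (fzero C) (ft C)
  else
    if v \in J then mx2 (ft C) (fopp (b (2 * jpos v))) (fzero C) (fone C)
    else mE C.

Definition is_endo (phi : nat -> mat2 C) : Prop :=
  forall v, (1 <= v <= n)%N ->
    mmul (xarr v) (phi (prevv n v)) = mmul (phi v) (xarr v) /\
    mmul (yarr v) (phi v) = mmul (phi (prevv n v)) (yarr v).
End Module.

(* At a vertex of (I ∩ J) ∪ (I^c ∩ J^c) the arrow x is the scalar 1 or t, so
   commuting with it forces phi_i = phi_(i-1): phi is constant between
   consecutive vertices of i_1 < j_1 < ... < i_r < j_r, and round the cycle
   phi_(i_1 - 1) = phi_(j_r).  At i_l the relation x phi_(i_l - 1) = phi_(i_l) x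
   with x = [[t, b], [0, 1]] determines phi_(i_l) and forces t | c; at j_l the
   relation with x = [[1, b], [0, t]] determines phi_(j_l) up to a division by
   t, whose exactness is the divisibility condition.  Walking once round the
   cycle from j_r, the b's accumulate into the partial sums S_m. *)

From HB Require Import structures.
From mathcomp Require Import all_boot all_order all_algebra.
From mathcomp Require Import reals complex boolp.
From mathcomp Require Import ring zify.
Set Implicit Arguments. Unset Strict Implicit. Unset Printing Implicit Defensive.
Import Order.TTheory GRing.Theory Num.Theory.
Local Open Scope ring_scope.

Section FpsRing.
Variable K : comRingType.
Local Notation F := (fps K).

Lemma faddA : associative (@fadd K).
Proof. by move=> f g h; apply: funext => m; rewrite /fadd addrA. Qed.

Lemma faddC : commutative (@fadd K).
Proof. by move=> f g; apply: funext => m; rewrite /fadd addrC. Qed.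

Lemma fadd0 : left_id (@fzero K) (@fadd K).
Proof. by move=> f; apply: funext => m; rewrite /fadd /fzero add0r. Qed.

Lemma faddN : left_inverse (@fzero K) (@fopp K) (@fadd K).
Proof. by move=> f; apply: funext => m; rewrite /fadd /fopp /fzero addNr. Qed.

HB.instance Definition _ := gen_eqMixin F.
HB.instance Definition _ := gen_choiceMixin F.
HB.instance Definition _ := GRing.isZmodule.Build F faddA faddC fadd0 faddN.

(* Truncation transfers the ring laws of [{poly K}] to [fmul]. *)
Definition fps_trunc (N : nat) (f : F) : {poly K} := \poly_(i < N.+1) f i.

Lemma fmul_trunc N (f g : F) m :
  (m <= N)%N -> fmul f g m = (fps_trunc N f * fps_trunc N g)`_m.
Proof.
move=> le_mN; rewrite coefM /fmul; apply: eq_bigr => i _.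
have le_im : (i <= m)%N by rewrite -ltnS.
by rewrite !coef_poly !ltnS (leq_trans le_im le_mN) (leq_trans (leq_subr _ _) le_mN).
Qed.

Lemma fmulA : associative (@fmul K).
Proof.
move=> f g h; apply: funext => m.
have -> : fmul f (fmul g h) m = (fps_trunc m f * (fps_trunc m g * fps_trunc m h))`_m.
  rewrite coefM /fmul; apply: eq_bigr => i _.
  have le_im : (i <= m)%N by rewrite -ltnS.
  by rewrite coef_poly ltnS le_im -(fmul_trunc _ _ (leq_subr _ _)).
have -> : fmul (fmul f g) h m = ((fps_trunc m f * fps_trunc m g) * fps_trunc m h)`_m.
  rewrite coefM /fmul; apply: eq_bigr => i _.
  have le_im : (i <= m)%N by rewrite -ltnS.
  by rewrite (coef_poly _ _ (m - i)) ltnS leq_subr -(fmul_trunc _ _ le_im).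
by rewrite mulrA.
Qed.

Lemma fmulC : commutative (@fmul K).
Proof. by move=> f g; apply: funext => m; rewrite !(fmul_trunc _ _ (leqnn m)) mulrC. Qed.

Lemma fmul1 : left_id (@fone K) (@fmul K).
Proof.
move=> f; apply: funext => m; rewrite /fmul big_ord_recl /= subn0 /fone /= mul1r.
by rewrite big1 ?addr0 // => i _; rewrite mul0r.
Qed.

Lemma fmulDl : left_distributive (@fmul K) (@fadd K).
Proof.
move=> f g h; apply: funext => m; rewrite /fmul /fadd -big_split /=.
by apply: eq_bigr => i _; rewrite mulrDl.
Qed.

HB.instance Definition _ := GRing.Zmodule_isComPzRing.Build F fmulA fmulC fmul1 fmulDl.

Local Notation t := (ft K).

Lemma coef_tM (f : F) m : (t * f) m = if m is m'.+1 then f m' else 0.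
Proof.
rewrite /GRing.mul /= /fmul big_ord_recl /ft /= mul0r add0r.
case: m => [|m]; first by rewrite big_ord0.
rewrite big_ord_recl /= subSS subn0 mul1r big1 ?addr0 // => i _.
by rewrite /bump /= mul0r.
Qed.

Lemma tinv_tM (f : F) : tinv (t * f) = f.
Proof. by apply: funext => m; rewrite /tinv coef_tM. Qed.

Lemma tM_tinv (f : F) : tdvd f -> t * tinv f = f.
Proof. by move=> f0; apply: funext => -[|m]; rewrite coef_tM. Qed.

Lemma tdvd_tM (f : F) : tdvd (t * f).
Proof. by rewrite /tdvd coef_tM. Qed.

Lemma tM_inj : injective ( *%R t : F -> F).
Proof. by move=> f g /(congr1 (@tinv K)); rewrite !tinv_tM. Qed.

Lemma mx2_inj (a b c d a' b' c' d' : F) :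
  mx2 a b c d = mx2 a' b' c' d' -> [/\ a = a', b = b', c = c' & d = d'].
Proof.
by move/matrixP=> e; split; [move: (e 0 0) | move: (e 0 1) | move: (e 1 0) | move: (e 1 1)];
  rewrite !mxE.
Qed.

Lemma mx2_eta (M : mat2 K) : M = mx2 (M 0 0) (M 0 1) (M 1 0) (M 1 1).
Proof.
apply/matrixP => i j; rewrite mxE.
by case: i => [[|[|i]] ?]; case: j => [[|[|j]] ?] //=; congr (M _ _); apply: val_inj.
Qed.

Lemma mmul_mx2 (a b c d e f g h : F) :
  mmul (mx2 a b c d) (mx2 e f g h) =
  mx2 (a * e + b * g) (a * f + b * h) (c * e + d * g) (c * f + d * h).
Proof.
apply/matrixP => i j; rewrite !mxE.
by case: i => [[|[|i]] ?]; case: j => [[|[|j]] ?] //=; rewrite !mxE.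
Qed.

End FpsRing.

Section Intertwining.
Variable K : comRingType.
Local Notation F := (fps K).
Local Notation t := (ft K).

Lemma scalar_intertwine (s : F) (P Q : mat2 K) : injective ( *%R s) ->
  mmul (mx2 s 0 0 s) P = mmul Q (mx2 s 0 0 s) -> Q = P.
Proof.
move=> s_inj; rewrite [P]mx2_eta [Q]mx2_eta !mmul_mx2 => /mx2_inj[].
rewrite !(mul0r, mulr0, addr0, add0r) => e1 e2 e3 e4.
by congr mx2; apply: s_inj; rewrite mulrC ?e1 ?e2 ?e3 ?e4.
Qed.

(* With s = S_(2l-1), resp. S_(2l), [mat_i] and [mat_j] are the matrices the
   statement gives for phi_(i_l), resp. phi_(j_l); [corr] is the quantity whose
   divisibility by t it asserts. *)
Definition corr (a c d s : F) : F := (d - a) * s - s * s * tinv c.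

Definition mat_i (a bb c d s : F) : mat2 K :=
  mx2 (a + s * tinv c) (t * bb + (d - a) * s - s * s * tinv c) (tinv c) (d - s * tinv c).

Definition mat_j (a bb c d s : F) : mat2 K :=
  mx2 (a + s * tinv c) (bb + tinv (corr a c d s)) c (d - s * tinv c).

Lemma mat_j0 (a bb c d : F) : mat_j a bb c d 0 = mx2 a bb c d.
Proof. by rewrite /mat_j /corr !(mul0r, mulr0, subr0, addr0). Qed.

Lemma xi_step (a bb c d s be : F) (Q : mat2 K) : tdvd (corr a c d s) ->
  mmul (mx2 t be 0 1) (mat_j a bb c d s) = mmul Q (mx2 t be 0 1) ->
  tdvd c /\ Q = mat_i a bb c d (s + be).
Proof.
move=> dvd_corr; rewrite [Q]mx2_eta /mat_j /mat_i mmul_mx2 mmul_mx2 => /mx2_inj[].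
set q := tinv c; rewrite !(mul0r, mulr0, mul1r, mulr1, addr0, add0r).
move: (Q 0 0) (Q 0 1) (Q 1 0) (Q 1 1) => q1 q2 q3 q4 e1 e2 e3 e4.
have c_tq : c = t * q3 by rewrite e3 mulrC.
have q_q3 : q = q3 by rewrite /q c_tq tinv_tM.
rewrite q_q3 in e1 e2 e4 *.
split; first by rewrite c_tq; apply: tdvd_tM.
have q1E : q1 = a + (s + be) * q3.
  by apply: tM_inj; rewrite mulrC -e1 c_tq /=; ring.
congr mx2 => //.
- have -> : q2 = t * (bb + tinv (corr a c d s)) + be * (d - s * q3) - q1 * be by rewrite e2; ring.
  by rewrite mulrDr tM_tinv // /corr -/q q_q3 q1E; ring.
- have -> : q4 = d - s * q3 - q3 * be by rewrite e4; ring.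
  by ring.
Qed.

Lemma xj_step (a bb c d s be : F) (Q : mat2 K) : tdvd c ->
  mmul (mx2 1 be 0 t) (mat_i a bb c d s) = mmul Q (mx2 1 be 0 t) ->
  tdvd (corr a c d (s + be)) /\ Q = mat_j a bb c d (s + be).
Proof.
move=> dvd_c; rewrite [Q]mx2_eta /mat_j /mat_i mmul_mx2 mmul_mx2 => /mx2_inj[].
rewrite !(mul0r, mulr0, mul1r, mulr1, addr0, add0r).
move: (Q 0 0) (Q 0 1) (Q 1 0) (Q 1 1) => q1 q2 q3 q4 e1 e2 e3 e4.
have corrE : corr a c d (s + be) = t * (q2 - bb).
  rewrite /corr mulrBr [t * q2]mulrC -[q2 * t](addKr (q1 * be)) -e2 -e1; ring.
split; first by rewrite corrE; apply: tdvd_tM.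
congr mx2.
- by rewrite -e1; ring.
- by rewrite corrE tinv_tM; ring.
- by rewrite -e3 tM_tinv.
- apply: tM_inj; rewrite /= mulrC.
  have -> : q4 * t = t * (d - s * tinv c) - q3 * be by rewrite e4; ring.
  by rewrite -e3; ring.
Qed.
End Intertwining.

Lemma index_map_iota (T : eqType) (f : nat -> T) m l :
  {in iota 1 m &, injective f} -> (1 <= l <= m)%N ->
  index (f l) (map f (iota 1 m)) = l.-1.
Proof.
move=> f_inj l_in.
have -> : f l = nth (f 0%N) (map f (iota 1 m)) l.-1.
  by rewrite (nth_map 0%N) ?size_iota ?nth_iota; [congr f | |]; lia.
by rewrite index_uniq ?size_map ?size_iota ?(map_inj_in_uniq f_inj) ?iota_uniq //; lia.
Qed.

Lemma prevv_pred n v : (1 < v)%N -> prevv n v = v.-1.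
Proof. by move=> v_gt1; rewrite /prevv gtn_eqF. Qed.

Section Endomorphism.
Variable R : realType.
Local Notation C := (CC R).
Local Notation t := (ft C).
Variables (n r : nat) (I J : seq nat) (iI jJ : nat -> nat) (b : nat -> fps C).
Variable phi : nat -> mat2 C.
Hypothesis iI_first : (1 <= iI 1)%N.
Hypothesis jJ_last : (jJ r <= n)%N.
Hypothesis iI_lt_jJ : forall l, (1 <= l <= r)%N -> (iI l < jJ l)%N.
Hypothesis jJ_lt_iIS : forall l, (1 <= l < r)%N -> (jJ l < iI l.+1)%N.

Lemma jJ_lt_iI l l' : (1 <= l)%N -> (l < l' <= r)%N -> (jJ l < iI l')%N.
Proof.
move=> l_ge1; elim: l' => // l' IH l'_in.
have := @jJ_lt_iIS l'; have := @iI_lt_jJ l'.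
have [lt_ll'|<-] : (l < l')%N \/ l = l' by lia.
  by have := IH; lia.
lia.
Qed.

Lemma iI_lt l l' : (1 <= l)%N -> (l < l' <= r)%N -> (iI l < iI l')%N.
Proof. by have := @iI_lt_jJ l; have := @jJ_lt_iI l l'; lia. Qed.

Lemma jJ_lt l l' : (1 <= l)%N -> (l < l' <= r)%N -> (jJ l < jJ l')%N.
Proof. by have := @iI_lt_jJ l'; have := @jJ_lt_iI l l'; lia. Qed.

Lemma special_range l : (1 <= l <= r)%N -> (1 <= iI l <= n)%N /\ (1 <= jJ l <= n)%N.
Proof.
move=> l_in; have := @iI_lt_jJ l.
have: (1 <= iI l)%N.
  have [->|] : l = 1%N \/ (1 < l)%N by lia.
    by [].
  by have := @iI_lt 1 l; lia.
have: (jJ l <= n)%N.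
  have [->|] : l = r \/ (l < r)%N by lia.
    by [].
  by have := @jJ_lt l r; lia.
lia.
Qed.

Lemma iI_inj : {in iota 1 r &, injective iI}.
Proof.
move=> x y; rewrite !mem_iota => x_in y_in.
by have := @iI_lt x y; have := @iI_lt y x; lia.
Qed.

Lemma jJ_inj : {in iota 1 r &, injective jJ}.
Proof.
move=> x y; rewrite !mem_iota => x_in y_in.
by have := @jJ_lt x y; have := @jJ_lt y x; lia.
Qed.

Lemma ipos_iI l : (1 <= l <= r)%N -> ipos r iI (iI l) = l.
Proof. by move=> l_in; rewrite /ipos (index_map_iota iI_inj l_in); lia. Qed.

Lemma jpos_jJ l : (1 <= l <= r)%N -> jpos r jJ (jJ l) = l.
Proof. by move=> l_in; rewrite /jpos (index_map_iota jJ_inj l_in); lia. Qed.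

Hypothesis I_minus_J : forall x, ((x \in I) && (x \notin J)) = (x \in map iI (iota 1 r)).
Hypothesis J_minus_I : forall x, ((x \in J) && (x \notin I)) = (x \in map jJ (iota 1 r)).

Definition plain v := ((v \in I) && (v \in J)) || ((v \notin I) && (v \notin J)).

Lemma plain_avoid x : (forall l, (1 <= l <= r)%N -> x <> iI l /\ x <> jJ l) -> plain x.
Proof.
move=> avoid; rewrite /plain; case xI: (x \in I); case xJ: (x \in J) => //=.
- have /mapP[l] : x \in map iI (iota 1 r) by rewrite -I_minus_J xI xJ.
  rewrite mem_iota => l_in x_eq.
  by have [] := avoid l ltac:(lia).
- have /mapP[l] : x \in map jJ (iota 1 r) by rewrite -J_minus_I xI xJ.
  rewrite mem_iota => l_in x_eq.
  by have [] := avoid l ltac:(lia).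
Qed.

Lemma xarr_iI l : (1 <= l <= r)%N -> xarr r I J iI jJ b (iI l) = mx2 t (b (2 * l).-1) 0 1.
Proof.
move=> l_in; have /andP[iI_I iI_J] : (iI l \in I) && (iI l \notin J).
  by rewrite I_minus_J; apply: map_f; rewrite mem_iota; lia.
by rewrite /xarr iI_I (negbTE iI_J) ipos_iI.
Qed.

Lemma xarr_jJ l : (1 <= l <= r)%N -> xarr r I J iI jJ b (jJ l) = mx2 1 (b (2 * l)) 0 t.
Proof.
move=> l_in; have /andP[jJ_J jJ_I] : (jJ l \in J) && (jJ l \notin I).
  by rewrite J_minus_I; apply: map_f; rewrite mem_iota; lia.
by rewrite /xarr jJ_J (negbTE jJ_I) jpos_jJ.
Qed.

Hypothesis endo : is_endo n r I J iI jJ b phi.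

Lemma phi_plain v : (1 <= v <= n)%N -> plain v -> phi v = phi (prevv n v).
Proof.
move=> v_in /orP[] /andP[vI vJ]; have [+ _] := endo v_in; rewrite /xarr.
- rewrite vI vJ; apply: scalar_intertwine.
  by move=> f g; rewrite !mul1r.
- rewrite (negbTE vI) (negbTE vJ); apply: scalar_intertwine.
  exact: tM_inj.
Qed.

Lemma phi_run u w : (1 <= u)%N -> (u <= w <= n)%N ->
  (forall v, (u < v <= w)%N -> plain v) -> phi w = phi u.
Proof.
move=> u_ge1; elim: w => [|w IH] w_in run; first by exfalso; lia.
have [<-//|le_uw] : u = w.+1 \/ (u <= w)%N by lia.
rewrite phi_plain ?run ?prevv_pred //=; try lia.
by apply: IH => [|v v_in]; [lia | apply: run; lia].
Qed.

Lemma phi_prev_run u w : (1 <= u)%N -> (u < w <= n)%N ->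
  (forall v, (u < v < w)%N -> plain v) -> phi (prevv n w) = phi u.
Proof.
move=> u_ge1 w_in run; rewrite prevv_pred; last by lia.
by apply: phi_run => [|| v v_in]; [lia | lia | apply: run; lia].
Qed.

Lemma phi_prev_jJ l : (1 <= l <= r)%N -> phi (prevv n (jJ l)) = phi (iI l).
Proof.
move=> l_in; have ranges := special_range l_in; have lt_ij := @iI_lt_jJ l.
apply: phi_prev_run => [|| v v_in]; try lia.
apply: plain_avoid => l' l'_in.
have [->|ne_l'l] := eqVneq l' l; first lia.
by have := @jJ_lt_iI l' l; have := @jJ_lt_iI l l'; have := @iI_lt_jJ l'; lia.
Qed.

Lemma phi_prev_iIS l : (1 <= l < r)%N -> phi (prevv n (iI l.+1)) = phi (jJ l).
Proof.
move=> l_in; have range_l := @special_range l; have range_l1 := @special_range l.+1.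
have lt_ji := @jJ_lt_iIS l; apply: phi_prev_run => [|| v v_in]; try lia.
apply: plain_avoid => l' l'_in; have := @iI_lt_jJ l'.
have [->|ne_l'l] := eqVneq l' l; first lia.
have [->|ne_l'l1] := eqVneq l' l.+1; first lia.
by have := @jJ_lt l' l; have := @iI_lt l.+1 l'; lia.
Qed.

Lemma phi_prev_iI1 : (0 < r)%N -> phi (prevv n (iI 1)) = phi (jJ r).
Proof.
move=> r_gt0; have range_r := @special_range r.
have phi_n : phi n = phi (jJ r).
  apply: phi_run => [|| v v_in]; try lia.
  apply: plain_avoid => l' l'_in; have := @iI_lt_jJ l'.
  have [->|ne_l'r] := eqVneq l' r; first lia.
  by have := @jJ_lt l' r; lia.
have [->|i1_gt1] : iI 1 = 1%N \/ (1 < iI 1)%N by lia.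
  by rewrite /prevv eqxx.
have before_i1 v : (v < iI 1)%N -> plain v.
  move=> lt_v_i1; apply: plain_avoid => l' l'_in; have := @iI_lt_jJ l'.
  have [->|ne_l'1] := eqVneq l' 1%N; first lia.
  by have := @iI_lt 1 l'; lia.
have range_1 := @special_range 1.
rewrite (phi_prev_run (u := 1)); [|lia|lia|by move=> v v_in; apply: before_i1; lia].
by rewrite phi_plain ?before_i1 /prevv ?eqxx //; lia.
Qed.

Lemma endo_iI l : (1 <= l <= r)%N ->
  mmul (mx2 t (b (2 * l).-1) 0 1) (phi (prevv n (iI l))) =
  mmul (phi (iI l)) (mx2 t (b (2 * l).-1) 0 1).
Proof. by move=> l_in; rewrite -(xarr_iI l_in); exact: (endo (proj1 (special_range l_in))).1. Qed.

Lemma endo_jJ l : (1 <= l <= r)%N ->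
  mmul (mx2 1 (b (2 * l)) 0 t) (phi (prevv n (jJ l))) =
  mmul (phi (jJ l)) (mx2 1 (b (2 * l)) 0 t).
Proof. by move=> l_in; rewrite -(xarr_jJ l_in); exact: (endo (proj2 (special_range l_in))).1. Qed.

Lemma phi_special a bb c d : (0 < r)%N -> phi (jJ r) = mx2 a bb c d ->
  forall l, (1 <= l <= r)%N ->
  [/\ tdvd c, phi (iI l) = mat_i a bb c d (psum b (2 * l).-1),
      phi (jJ l) = mat_j a bb c d (psum b (2 * l))
    & tdvd (corr a c d (psum b (2 * l)))].
Proof.
move=> r_gt0 phi_jr; elim=> // l IH l_in.
have [prev_i dvd_corr] : phi (prevv n (iI l.+1)) = mat_j a bb c d (psum b (2 * l))
                         /\ tdvd (corr a c d (psum b (2 * l))).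
  case: l IH l_in => [_ _|l IH l_in].
    rewrite phi_prev_iI1 // phi_jr mat_j0 /corr /=.
    by split => //; rewrite !(mulr0, mul0r, subr0).
  have [_ _ phi_j dvd] := IH ltac:(lia).
  by rewrite phi_prev_iIS ?phi_j; [split | lia].
have e_i : (2 * l.+1).-1 = (2 * l).+1 by lia.
have e_j : (2 * l.+1)%N = (2 * l).+2 by lia.
have := endo_iI l_in; rewrite prev_i e_i => /(xi_step dvd_corr)[dvd_c phi_i].
have := endo_jJ l_in; rewrite phi_prev_jJ // phi_i e_j => /(xj_step dvd_c)[dvd_corr' phi_j].
by split.
Qed.

End Endomorphism.

Unset Implicit Arguments.

Theorem proposition3p2 (R : realType) (n k r : nat) (I J : seq nat)
    (iI jJ : nat -> nat) (b : nat -> fps (CC R)) (phi : nat -> mat2 (CC R)) :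
  (6 <= n)%N -> (1 <= k <= n - 1)%N ->
  ksubset n k I -> ksubset n k J ->
  tightly_interlacing k I J r -> (0 < r)%N ->
  (* I \ J = {i_1,...,i_r}, J \ I = {j_1,...,j_r} *)
  (forall x, ((x \in I) && (x \notin J)) = (x \in map iI (iota 1 r))) ->
  (forall x, ((x \in J) && (x \notin I)) = (x \in map jJ (iota 1 r))) ->
  (* 1 <= i_1 < j_1 < i_2 < ... < i_r < j_r <= n *)
  (1 <= iI 1)%N -> (jJ r <= n)%N ->
  (forall l, (1 <= l <= r)%N -> (iI l < jJ l)%N) ->
  (forall l, (1 <= l < r)%N -> (jJ l < iI l.+1)%N) ->
  (* b_1 + ... + b_{2r} = 0 *)
  psum b (2 * r) = fzero (CC R) ->
  is_endo n r I J iI jJ b phi ->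
  let S := psum b in
  exists a bb c d : fps (CC R),
    [/\ tdvd c,
        (forall m, (1 <= m <= r - 1)%N ->
           tdvd (fsub (fmul (fsub d a) (S (2 * m)%N))
                      (fmul (fmul (S (2 * m)%N) (S (2 * m)%N)) (tinv c)))),
        phi (jJ r) = mx2 a bb c d,
        (forall l, (1 <= l <= r)%N ->
           let s := S (2 * l).-1 in
           phi (iI l) =
             mx2 (fadd a (fmul s (tinv c)))
                 (fsub (fadd (fmul (ft _) bb) (fmul (fsub d a) s))
                       (fmul (fmul s s) (tinv c)))
                 (tinv c)
                 (fsub d (fmul s (tinv c)))) &
        [/\ (forall l, (1 <= l <= r)%N ->
              let s := S (2 * l)%N in
              phi (jJ l) =
                mx2 (fadd a (fmul s (tinv c)))
                    (fadd bb (tinv (fsub (fmul (fsub d a) s)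
                                         (fmul (fmul s s) (tinv c)))))
                    c
                    (fsub d (fmul s (tinv c)))) &
            (forall v, (1 <= v <= n)%N ->
              ((v \in I) && (v \in J)) || ((v \notin I) && (v \notin J)) ->
              phi v = phi (prevv n v))]].
Proof.
move=> _ _ _ _ _ r_gt0 I_minus_J J_minus_I iI_first jJ_last iI_lt_jJ jJ_lt_iIS _ endo S.
have phi_at := phi_special iI_first jJ_last iI_lt_jJ jJ_lt_iIS I_minus_J J_minus_I endo
  r_gt0 (mx2_eta (phi (jJ r))).
exists (phi (jJ r) 0 0), (phi (jJ r) 0 1), (phi (jJ r) 1 0), (phi (jJ r) 1 1).
split.
- by have [] := phi_at r ltac:(lia).
- by move=> m m_in; have [] := phi_at m ltac:(lia).
- exact: mx2_eta.
- by move=> l /phi_at[].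
- split; first by move=> l /phi_at[].
  by move=> v v_in v_plain; exact (phi_plain endo v_in v_plain).
Qed.
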